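(* Let $1\le m\le k$, let $v_0,\pi_1,v_1,\dots,\pi_k$ be generated by Approximate Value Iteration with errors $\epsilon_1,\dots,\epsilon_{k-1}$, let $\epsilon_\infty=\max_{1\le j<k}\|\epsilon_j\|_\infty$, and let $\pi_{k,m}$ be the periodic non-stationary policy $\pi_k\,\pi_{k-1}\cdots\pi_{k-m+1}\,\pi_k\cdots\pi_{k-m+1}\cdots$. Then $$\|T_{\pi_k}v_{k-1}-v_{\pi_{k,m}}\|_\infty\le \gamma^m\|v_{k-m}-v_{\pi_{k,m}}\|_\infty+\frac{\gamma-\gamma^m}{1-\gamma}\,\epsilon_\infty.$$
   Context: A Markov Decision Process with finite state space $S$, finite action space $A$, reward $r(s,a)$, transitions $p(s'|s,a)$, discount $\gamma\in[0,1)$. For a policy $\pi:S\to A$, $r_\pi(s)=r(s,\pi(s))$, $P_\pi(s,s')=p(s'|s,\pi(s))$, and $T_\pi v=r_\pi+\gamma P_\pi v$. The Bellman optimality operator is $Tv=\max_\pi T_\pi v$, and $\pi$ is greedy w.r.t. $v$ if $T_\pi v=Tv$. Approximate Value Iteration: from arbitrary $v_0$, for $j\ge0$ pick any $\pi_{j+1}$ greedy w.r.t. $v_j$ and set $v_{j+1}=T_{\pi_{j+1}}v_j+\epsilon_{j+1}$ with arbitrary errors $\epsilon_{j+1}:S\to\mathbb R$. A non-stationary policy $\sigma_0\sigma_1\cdots$ uses $\sigma_t$ at time $t$, with value $\sum_{t\ge0}\gamma^t P_{\sigma_0}\cdots P_{\sigma_{t-1}}r_{\sigma_t}$. *)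

From Stdlib Require Import Reals Lra Lia List.
Import ListNotations.
Open Scope R_scope.

(* States are 0..nS-1 and actions are 0..nA-1 (encoded as nat).
   r s a : reward;  p s' s a : p(s'|s,a).
   Value functions are nat -> R (only values at s < nS matter).
   A (deterministic stationary) policy is nat -> nat. *)

Fixpoint fsum (n : nat) (f : nat -> R) : R :=
  match n with
  | O => 0
  | S n' => fsum n' f + f n'
  end.

Definition supnorm (nS : nat) (v : nat -> R) : R :=
  fold_right Rmax 0 (map (fun s => Rabs (v s)) (seq 0 nS)).

Definition Ppi (nS : nat) (p : nat -> nat -> nat -> R) (pi : nat -> nat)
  (v : nat -> R) : nat -> R :=
  fun s => fsum nS (fun s' => p s' s (pi s) * v s').

Definition Tpi (nS : nat) (r : nat -> nat -> R) (p : nat -> nat -> nat -> R)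
  (gamma : R) (pi : nat -> nat) (v : nat -> R) : nat -> R :=
  fun s => r s (pi s) + gamma * Ppi nS p pi v s.

Definition Qval (nS : nat) (r : nat -> nat -> R) (p : nat -> nat -> nat -> R)
  (gamma : R) (v : nat -> R) (s a : nat) : R :=
  r s a + gamma * fsum nS (fun s' => p s' s a * v s').

Definition Topt (nS nA : nat) (r : nat -> nat -> R) (p : nat -> nat -> nat -> R)
  (gamma : R) (v : nat -> R) : nat -> R :=
  fun s => fold_right Rmax (Qval nS r p gamma v s 0)
             (map (Qval nS r p gamma v s) (seq 0 nA)).

Definition greedy (nS nA : nat) (r : nat -> nat -> R) (p : nat -> nat -> nat -> R)
  (gamma : R) (pi : nat -> nat) (v : nat -> R) : Prop :=
  forall s, (s < nS)%nat -> Tpi nS r p gamma pi v s = Topt nS nA r p gamma v s.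

(* t-th term of the value of a non-stationary policy sigma_0 sigma_1 ... :
   nsterm sigma t = P_{sigma_0} ... P_{sigma_{t-1}} r_{sigma_t} *)
Fixpoint nsterm (nS : nat) (r : nat -> nat -> R) (p : nat -> nat -> nat -> R)
  (sigma : nat -> nat -> nat) (t : nat) : nat -> R :=
  match t with
  | O => fun s => r s (sigma O s)
  | S t' => Ppi nS p (sigma O) (nsterm nS r p (fun i => sigma (S i)) t')
  end.

Definition is_ns_value (nS : nat) (r : nat -> nat -> R) (p : nat -> nat -> nat -> R)
  (gamma : R) (sigma : nat -> nat -> nat) (w : nat -> R) : Prop :=
  forall s, (s < nS)%nat ->
    infinite_sum (fun t => gamma ^ t * nsterm nS r p sigma t s) (w s).

(* the periodic policy pi_{k,m} = pi_k pi_{k-1} ... pi_{k-m+1} pi_k ... *)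
Definition periodic_policy (pi : nat -> nat -> nat) (k m : nat) : nat -> nat -> nat :=
  fun t => pi (k - (t mod m))%nat.

(* eps_inf = max_{1 <= j < k} ||eps_j||_inf  (0 if k = 1) *)
Definition eps_inf (nS : nat) (eps : nat -> nat -> R) (k : nat) : R :=
  fold_right Rmax 0 (map (fun j => supnorm nS (eps j)) (seq 1 (k - 1))).

From Stdlib Require Import Reals Lra Lia List FunctionalExtensionality.
Open Scope R_scope.

(* Write tau_j := pi_(k-m+j) for 1 <= j <= m and
   G_l := T_(tau_l) ... T_(tau_1) (the function [Titer] below).
   1. Each T_pi is a gamma-contraction in sup norm, because P_pi averages.
   2. Error propagation: if u_(j+1) = T_(tau_(j+1)) u_j + e_(j+1) with
      |e_j| <= E, then by induction on l
        |T_(tau_l) u_(l-1) - G_l w| <= gamma^l |u_0 - w| + (gamma-gamma^l)/(1-gamma) E. The value w of an m-periodic non-stationary policy sigma is a fixed point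
      of T_(sigma_0) ... T_(sigma_(m-1)): the partial sums [partial_value] of its
      defining series satisfy S_(N+m) = T_(sigma_0)...T_(sigma_(m-1)) S_N, and these
      operators are continuous.  For sigma = pi_(k,m) this composite is G_m.
   The theorem is step 2 with l = m, u_j = v_(k-m+j), combined with G_m w = w. *)

Lemma fsum_ext n f g : (forall i, (i < n)%nat -> f i = g i) -> fsum n f = fsum n g.
Proof.
  induction n; simpl; intros H; auto.
  rewrite IHn, H; auto; intros; apply H; lia.
Qed.

Lemma fsum_plus n f g : fsum n (fun i => f i + g i) = fsum n f + fsum n g.
Proof. induction n; simpl; [lra | rewrite IHn; lra]. Qed.

Lemma fsum_scal n c f : fsum n (fun i => c * f i) = c * fsum n f.
Proof. induction n; simpl; [lra | rewrite IHn; lra]. Qed.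

Lemma fsum_le n f g : (forall i, (i < n)%nat -> f i <= g i) -> fsum n f <= fsum n g.
Proof.
  induction n; simpl; intros H; [lra |].
  assert (f n <= g n) by (apply H; lia).
  assert (fsum n f <= fsum n g) by (apply IHn; intros; apply H; lia).
  lra.
Qed.

Lemma fsum_abs n f : Rabs (fsum n f) <= fsum n (fun i => Rabs (f i)).
Proof.
  induction n; simpl.
  - rewrite Rabs_R0; lra.
  - eapply Rle_trans; [apply Rabs_triang | lra].
Qed.

Lemma cv_const (c : R) : Un_cv (fun _ => c) c.
Proof.
  intros e He; exists O; intros; unfold R_dist.
  rewrite Rminus_diag, Rabs_R0; exact He.
Qed.

Lemma fsum_cv n (a : nat -> nat -> R) b :
  (forall i, (i < n)%nat -> Un_cv (fun N => a N i) (b i)) ->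
  Un_cv (fun N => fsum n (a N)) (fsum n b).
Proof.
  induction n; intros H; simpl.
  - apply cv_const.
  - apply CV_plus; [apply IHn; intros |]; apply H; lia.
Qed.

Lemma fold_Rmax_ge (f : nat -> R) a n j : (a <= j < a + n)%nat ->
  f j <= fold_right Rmax 0 (map f (seq a n)).
Proof.
  revert a; induction n; intros a H; [lia |]; simpl.
  destruct (Nat.eq_dec j a) as [-> | Hja]; [apply Rmax_l |].
  eapply Rle_trans; [apply (IHn (S a)); lia | apply Rmax_r].
Qed.

Lemma supnorm_ge nS v s : (s < nS)%nat -> Rabs (v s) <= supnorm nS v.
Proof. intros H; apply (fold_Rmax_ge (fun s => Rabs (v s))); lia. Qed.

Lemma supnorm_le nS v c : (1 <= nS)%nat ->
  (forall s, (s < nS)%nat -> Rabs (v s) <= c) -> supnorm nS v <= c.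
Proof.
  intros HnS H.
  assert (Hc : 0 <= c) by (eapply Rle_trans; [apply Rabs_pos | apply (H O); lia]).
  assert (Hseq : forall a n, (forall s, (a <= s < a + n)%nat -> Rabs (v s) <= c) ->
            fold_right Rmax 0 (map (fun s => Rabs (v s)) (seq a n)) <= c).
  { intros a n; revert a; induction n; intros a Ha; simpl; [exact Hc |].
    apply Rmax_lub; [apply Ha; lia | apply IHn; intros; apply Ha; lia]. }
  apply Hseq; intros; apply H; lia.
Qed.

Lemma eps_inf_ge nS eps k j : (1 <= j <= k - 1)%nat ->
  supnorm nS (eps j) <= eps_inf nS eps k.
Proof. intros H; apply (fold_Rmax_ge (fun j => supnorm nS (eps j))); lia. Qed.

Section BellmanOperators.

Variables (nS nA : nat) (r : nat -> nat -> R) (p : nat -> nat -> nat -> R) (gamma : R).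
Hypothesis Hp_nonneg : forall s' s a,
  (s' < nS)%nat -> (s < nS)%nat -> (a < nA)%nat -> 0 <= p s' s a.
Hypothesis Hp_sum : forall s a,
  (s < nS)%nat -> (a < nA)%nat -> fsum nS (fun s' => p s' s a) = 1.
Hypothesis Hgamma : 0 <= gamma < 1.

Let T := Tpi nS r p gamma.

(* P_pi is an average over successor states, so it preserves uniform bounds. *)
Lemma Ppi_bound pi f s c :
  (s < nS)%nat -> (pi s < nA)%nat ->
  (forall s', (s' < nS)%nat -> Rabs (f s') <= c) ->
  Rabs (Ppi nS p pi f s) <= c.
Proof.
  intros Hs Ha Hf; unfold Ppi.
  eapply Rle_trans; [apply fsum_abs |].
  apply Rle_trans with (fsum nS (fun s' => c * p s' s (pi s))).
  - apply fsum_le; intros i Hi.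
    rewrite Rabs_mult, (Rabs_pos_eq (p i s (pi s))) by auto.
    specialize (Hp_nonneg i s (pi s) Hi Hs Ha); specialize (Hf i Hi); nra.
  - rewrite fsum_scal, Hp_sum by auto; lra.
Qed.

Lemma Tpi_contraction pi A B s c :
  (s < nS)%nat -> (pi s < nA)%nat ->
  (forall s', (s' < nS)%nat -> Rabs (A s' - B s') <= c) ->
  Rabs (T pi A s - T pi B s) <= gamma * c.
Proof.
  intros Hs Ha Hf; unfold T, Tpi.
  replace (r s (pi s) + gamma * Ppi nS p pi A s - (r s (pi s) + gamma * Ppi nS p pi B s))
    with (gamma * Ppi nS p pi (fun s' => A s' - B s') s).
  - rewrite Rabs_mult, Rabs_pos_eq by lra.
    apply Rmult_le_compat_l; [lra | apply Ppi_bound; auto].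
  - unfold Ppi.
    rewrite (fsum_ext _ _ (fun s' => p s' s (pi s) * A s' + - 1 * (p s' s (pi s) * B s')))
      by (intros; ring).
    rewrite fsum_plus, fsum_scal; ring.
Qed.

(* [Titer tau l f] = T_(tau l) ( ... (T_(tau 1) f)): the operators applied in
   the order in which approximate value iteration uses them. *)
Fixpoint Titer (tau : nat -> nat -> nat) (l : nat) (f : nat -> R) : nat -> R :=
  match l with
  | O => f
  | S l' => T (tau (S l')) (Titer tau l' f)
  end.

Lemma Titer_ext tau tau' l f :
  (forall j, (1 <= j <= l)%nat -> tau j = tau' j) -> Titer tau l f = Titer tau' l f.
Proof.
  induction l; intros H; simpl; [reflexivity |].
  rewrite (H (S l)) by lia.
  rewrite IHl by (intros; apply H; lia).
  reflexivity.
Qed.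

Lemma avi_error_propagation (tau : nat -> nat -> nat) (u e : nat -> nat -> R)
    (w : nat -> R) (X E : R) (n : nat) :
  (forall j s, (1 <= j <= S n)%nat -> (s < nS)%nat -> (tau j s < nA)%nat) ->
  (forall j s, (S j <= n)%nat -> (s < nS)%nat ->
     u (S j) s = T (tau (S j)) (u j) s + e (S j) s) ->
  (forall j s, (1 <= j <= n)%nat -> (s < nS)%nat -> Rabs (e j s) <= E) ->
  (forall s, (s < nS)%nat -> Rabs (u O s - w s) <= X) ->
  forall s, (s < nS)%nat ->
  Rabs (T (tau (S n)) (u n) s - Titer tau (S n) w s)
    <= gamma ^ S n * X + (gamma - gamma ^ S n) / (1 - gamma) * E.
Proof.
  induction n as [| n IH]; intros Hadm Hupd Herr Hinit s Hs.
  - apply Rle_trans with (gamma * X).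
    + apply Tpi_contraction; auto; apply Hadm; lia.
    + right; simpl; field; lra.
  - set (B := gamma ^ S n * X + (gamma - gamma ^ S n) / (1 - gamma) * E).
    assert (Hprev : forall s', (s' < nS)%nat ->
              Rabs (u (S n) s' - Titer tau (S n) w s') <= B + E).
    { intros s' Hs'.
      rewrite Hupd by (auto; lia).
      assert (HIH : Rabs (T (tau (S n)) (u n) s' - Titer tau (S n) w s') <= B)
        by (apply IH; [ intros j t Hj Ht; apply Hadm | intros j t Hj Ht; apply Hupd
                      | intros j t Hj Ht; apply Herr | exact Hinit | exact Hs' ]; auto; lia).
      assert (He : Rabs (e (S n) s') <= E) by (apply Herr; auto; lia).
      pose proof (Rabs_triang (T (tau (S n)) (u n) s' - Titer tau (S n) w s') (e (S n) s')).
      replace (T (tau (S n)) (u n) s' + e (S n) s' - Titer tau (S n) w s')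
        with (T (tau (S n)) (u n) s' - Titer tau (S n) w s' + e (S n) s') by ring.
      lra. }
    apply Rle_trans with (gamma * (B + E)).
    + apply Tpi_contraction; auto; apply Hadm; lia.
    + right; unfold B; simpl; field; lra.
Qed.

(* [Tcomp l sigma f] = T_(sigma 0) ( ... (T_(sigma (l-1)) f)): the operators in
   the order of a non-stationary policy sigma_0 sigma_1 ... *)
Fixpoint Tcomp (l : nat) (sigma : nat -> nat -> nat) (f : nat -> R) : nat -> R :=
  match l with
  | O => f
  | S l' => T (sigma O) (Tcomp l' (fun t => sigma (S t)) f)
  end.

Lemma Tcomp_Titer l : forall sigma f,
  Tcomp l sigma f = Titer (fun j => sigma (l - j)%nat) l f.
Proof.
  induction l; intros sigma f; [reflexivity |]; cbn [Tcomp Titer].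
  rewrite IHl, Nat.sub_diag; f_equal.
  apply Titer_ext; intros j Hj; f_equal; lia.
Qed.

Lemma Tcomp_cv l : forall sigma (f : nat -> nat -> R) g,
  (forall s, (s < nS)%nat -> Un_cv (fun N => f N s) (g s)) ->
  forall s, (s < nS)%nat -> Un_cv (fun N => Tcomp l sigma (f N) s) (Tcomp l sigma g s).
Proof.
  induction l; intros sigma f g H s Hs; simpl; auto.
  unfold T, Tpi, Ppi.
  apply CV_plus; [apply cv_const |].
  apply CV_mult; [apply cv_const |].
  apply fsum_cv; intros i Hi.
  apply CV_mult; [apply cv_const | apply IHl; auto].
Qed.

Definition partial_value (sigma : nat -> nat -> nat) (N : nat) (s : nat) : R :=
  sum_f_R0 (fun t => gamma ^ t * nsterm nS r p sigma t s) N.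

Lemma Ppi_scal pi c g s : Ppi nS p pi (fun s' => c * g s') s = c * Ppi nS p pi g s.
Proof. unfold Ppi; rewrite <- fsum_scal; apply fsum_ext; intros; ring. Qed.

Lemma Ppi_sum pi (g : nat -> nat -> R) N s :
  Ppi nS p pi (fun s' => sum_f_R0 (fun t => g t s') N) s
  = sum_f_R0 (fun t => Ppi nS p pi (g t) s) N.
Proof.
  induction N; simpl; [reflexivity |].
  rewrite <- IHN; unfold Ppi; rewrite <- fsum_plus.
  apply fsum_ext; intros; ring.
Qed.

Lemma partial_value_step sigma N s :
  partial_value sigma (S N) s = T (sigma O) (partial_value (fun t => sigma (S t)) N) s.
Proof.
  unfold partial_value, T, Tpi.
  rewrite decomp_sum by lia; simpl pred; simpl nsterm; f_equal; [simpl; ring |].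
  rewrite Ppi_sum, scal_sum; apply sum_eq; intros i _.
  rewrite Ppi_scal; simpl; ring.
Qed.

Lemma partial_value_iter l : forall sigma N s,
  partial_value sigma (N + l) s
  = Tcomp l sigma (partial_value (fun t => sigma (l + t)%nat) N) s.
Proof.
  induction l; intros sigma N s.
  - rewrite Nat.add_0_r; reflexivity.
  - rewrite Nat.add_succ_r, partial_value_step; simpl Tcomp; f_equal.
    apply functional_extensionality; intros x; apply IHl.
Qed.

Lemma periodic_value_fixed_point m sigma w :
  (forall t, sigma (m + t)%nat = sigma t) ->
  is_ns_value nS r p gamma sigma w ->
  forall s, (s < nS)%nat -> Tcomp m sigma w s = w s.
Proof.
  intros Hper Hw s Hs.
  assert (Hshift : (fun t => sigma (m + t)%nat) = sigma)
    by (apply functional_extensionality; auto).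
  apply UL_sequence with (fun N => partial_value sigma (N + m) s).
  - eapply Un_cv_ext; [| exact (Tcomp_cv m sigma (partial_value sigma) w Hw s Hs)].
    intros N; rewrite partial_value_iter, Hshift; reflexivity.
  - intros eps Heps; destruct (Hw s Hs eps Heps) as [N0 HN].
    exists N0; intros n Hn; apply HN; lia.
Qed.

End BellmanOperators.

Lemma periodic_policy_periodic pi k m t :
  periodic_policy pi k m (m + t)%nat = periodic_policy pi k m t.
Proof.
  unfold periodic_policy; do 2 f_equal.
  replace (m + t)%nat with (t + 1 * m)%nat by lia; apply Nat.Div0.mod_add.
Qed.

Lemma periodic_policy_reversed pi k m j : (1 <= j <= m)%nat -> (m <= k)%nat ->
  periodic_policy pi k m (m - j)%nat = pi (k - m + j)%nat.
Proof.
  intros Hj Hmk; unfold periodic_policy.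
  rewrite Nat.mod_small by lia; f_equal; lia.
Qed.

Theorem mainTheorem6
  (nS nA : nat) (HnS : (1 <= nS)%nat) (HnA : (1 <= nA)%nat)
  (r : nat -> nat -> R) (p : nat -> nat -> nat -> R) (gamma : R)
  (Hp_nonneg : forall s' s a, (s' < nS)%nat -> (s < nS)%nat -> (a < nA)%nat -> 0 <= p s' s a)
  (Hp_sum : forall s a, (s < nS)%nat -> (a < nA)%nat -> fsum nS (fun s' => p s' s a) = 1)
  (Hgamma : 0 <= gamma < 1)
  (k m : nat) (Hm1 : (1 <= m)%nat) (Hmk : (m <= k)%nat)
  (v : nat -> nat -> R) (pi : nat -> nat -> nat) (eps : nat -> nat -> R)
  (Hpi_adm : forall j s, (1 <= j <= k)%nat -> (s < nS)%nat -> (pi j s < nA)%nat)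
  (Hgreedy : forall j, (j + 1 <= k)%nat -> greedy nS nA r p gamma (pi (j + 1)%nat) (v j))
  (Hupdate : forall j, (j + 1 <= k - 1)%nat -> forall s, (s < nS)%nat ->
     v (j + 1)%nat s = Tpi nS r p gamma (pi (j + 1)%nat) (v j) s + eps (j + 1)%nat s)
  (w : nat -> R) (Hw : is_ns_value nS r p gamma (periodic_policy pi k m) w) :
  supnorm nS (fun s => Tpi nS r p gamma (pi k) (v (k - 1)%nat) s - w s)
  <= gamma ^ m * supnorm nS (fun s => v (k - m)%nat s - w s)
     + (gamma - gamma ^ m) / (1 - gamma) * eps_inf nS eps k.
Proof.
  set (tau := fun j => pi (k - m + j)%nat).
  assert (Hfix : forall s, (s < nS)%nat -> Titer nS r p gamma tau m w s = w s).
  { intros s Hs.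
    rewrite <- (periodic_value_fixed_point nS r p gamma m _ w
                  (periodic_policy_periodic pi k m) Hw s Hs), Tcomp_Titer.
    erewrite Titer_ext; [reflexivity |].
    intros j Hj; symmetry; apply periodic_policy_reversed; lia. }
  apply supnorm_le; [exact HnS |]; intros s Hs.
  rewrite <- Hfix by exact Hs.
  replace (pi k) with (tau m) by (unfold tau; f_equal; lia).
  replace (k - 1)%nat with (k - m + (m - 1))%nat by lia.
  pose proof (avi_error_propagation nS nA r p gamma Hp_nonneg Hp_sum Hgamma tau
                (fun j => v (k - m + j)%nat) (fun j => eps (k - m + j)%nat) w
                (supnorm nS (fun s => v (k - m)%nat s - w s)) (eps_inf nS eps k) (m - 1))
    as Hprop.
  replace (S (m - 1)) with m in Hprop by lia.
  apply Hprop; auto.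
  - intros j s' Hj Hs'; apply Hpi_adm; [lia | exact Hs'].
  - intros j s' Hj Hs'; unfold tau; replace (k - m + S j)%nat with (k - m + j + 1)%nat by lia.
    apply Hupdate; [lia | exact Hs'].
  - intros j s' Hj Hs'.
    eapply Rle_trans; [apply supnorm_ge, Hs' | apply eps_inf_ge; lia].
  - intros s' Hs'; rewrite Nat.add_0_r; apply (supnorm_ge nS (fun s => v (k - m)%nat s - w s)), Hs'.
Qed.
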